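(* Let $m\ge 2$ and $0\le c<1$, and consider the best-worst rule $s=(c,m)$. A profile $x=((x^1,n_1),\dots,(x^q,n_q))$ with $q\ge 2$ is a non-convergent Nash equilibrium if and only if all of the following hold, where $I^p:=\ell(I_1^R)$: (i) $n_i\le 2$ for all $i\in[q]$, and $n_1=n_q=2$; (ii) $\ell(I_q^L)=I^p$, and for every $1<i<q$ with $n_i=2$ we have $\ell(I_i^L)=\ell(I_i^R)=I^p$; (iii) $\ell(I_1^L)=\ell(I_q^R)=I^p+\frac{c}{2}$; (iv) for every $i$ with $n_i=1$: $\ell(I_i)\ge \ell(I_k^L)$ for all $k\neq 1$ and $\ell(I_i)\ge \ell(I_k^R)$ for all $k\ne q$; (v) $I^p\ge \ell(I_k^L)$ for all $k\ne 1$ and $I^p\ge \ell(I_k^R)$ for all $k\ne q$.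
   Context: Setting: voters' ideal points are distributed uniformly (unit mass, Lebesgue measure) on $[0,1]$. There are $m$ candidates; a profile is $x=(x_1,\dots,x_m)\in[0,1]^m$. A voter with ideal point $y$ ranks candidates by distance $|x_i-y|$ (closer is better); ties are broken by a fair lottery (uniformly random strict order among tied candidates). Under the best-worst rule $s=(c,m)$ ($c\ge0$), a candidate receives $1$ point from each voter ranking her first, $-c$ from each voter ranking her last ($m$-th), and $0$ otherwise; $v_i(x)$ is candidate $i$'s expected total points. A (pure-strategy Nash) equilibrium is a profile $x^*$ with $v_i(x^* )\ge v_i(t,x^*_{-i})$ for all $i$ and $t\in[0,1]$ ($(t,x_{-i})$ is $x$ with $x_i$ replaced by $t$); it is non-convergent (NCNE) if at least two platforms are distinct. Notation: $[n]=\{1,\dots,n\}$. A profile determines its distinct occupied positions $x^1<x^2<\dots<x^q$, with $n_j$ the number of candidates at $x^j$; we write $x=((x^1,n_1),\dots,(x^q,n_q))$. For an interval $I=[a,b]$, $\ell(I)=b-a$. For $q\ge2$ the full-electorates are $I_1=[0,(x^1+x^2)/2]$, $I_i=[(x^{i-1}+x^i)/2,(x^i+x^{i+1})/2]$ for $2\le i\le q-1$, and $I_q=[(x^{q-1}+x^q)/2,1]$; the half-electorates are $I_i^L=\{y\in I_i: y\le x^i\}$ and $I_i^R=\{y\in I_i:y\ge x^i\}$. *)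

From Stdlib Require Import Reals Lra List ClassicalEpsilon.
Import ListNotations.
Open Scope R_scope.

(* Integral over [0,1] (Riemann); voters have uniform (Lebesgue) density on [0,1].
   Defined as RiemannInt when f is Riemann integrable on [0,1] (value independent
   of the integrability proof), 0 otherwise. All score densities below are
   piecewise constant with finitely many pieces, hence integrable. *)
Definition integral01 (f : R -> R) : R :=
  match excluded_middle_informative (exists pr : Riemann_integrable f 0 1, True) with
  | left H => RiemannInt (proj1_sig (constructive_indefinite_description _ H))
  | right _ => 0
  end.

(* A profile of m candidates: x : nat -> R, candidate j < m at position x j. *)
Definition dist (x : nat -> R) (j : nat) (y : R) : R := Rabs (x j - y).

Definition n_tied (m : nat) (x : nat -> R) (i : nat) (y : R) : nat :=
  length (filter (fun j => if Req_EM_T (dist x j y) (dist x i y) then true else false)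
                 (seq 0 m)).

Definition is_closest (m : nat) (x : nat -> R) (i : nat) (y : R) : bool :=
  forallb (fun j => if Rle_dec (dist x i y) (dist x j y) then true else false) (seq 0 m).

Definition is_farthest (m : nat) (x : nat -> R) (i : nat) (y : R) : bool :=
  forallb (fun j => if Rle_dec (dist x j y) (dist x i y) then true else false) (seq 0 m).

(* Expected points candidate i gets from voter y under the best-worst rule (c,m),
   with ties broken by a uniformly random strict order among tied candidates:
   P(i ranked first) = 1/#closest if i closest, P(i ranked last) = 1/#farthest
   if i farthest. *)
Definition voter_score (m : nat) (c : R) (x : nat -> R) (i : nat) (y : R) : R :=
  (if is_closest m x i y then / INR (n_tied m x i y) else 0)
  - c * (if is_farthest m x i y then / INR (n_tied m x i y) else 0).

Definition v (m : nat) (c : R) (x : nat -> R) (i : nat) : R :=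
  integral01 (voter_score m c x i).

Definition deviate (x : nat -> R) (i : nat) (t : R) : nat -> R :=
  fun j => if Nat.eqb j i then t else x j.

Definition is_profile (m : nat) (x : nat -> R) : Prop :=
  forall j, (j < m)%nat -> 0 <= x j <= 1.

Definition is_NE (m : nat) (c : R) (x : nat -> R) : Prop :=
  is_profile m x /\
  forall i, (i < m)%nat -> forall t, 0 <= t <= 1 ->
    v m c x i >= v m c (deviate x i t) i.

Definition is_NCNE (m : nat) (c : R) (x : nat -> R) : Prop :=
  is_NE m c x /\ exists i j, (i < m)%nat /\ (j < m)%nat /\ x i <> x j.

Definition n_at (m : nat) (x : nat -> R) (p : R) : nat :=
  length (filter (fun j => if Req_EM_T (x j) p then true else false) (seq 0 m)).

(* x = ((pos 1, n 1), ..., (pos q, n q)): pos 1 < ... < pos q are exactly the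
   distinct occupied positions (1-based indexing), n k the multiplicities. *)
Definition decomposition (m : nat) (x : nat -> R) (q : nat) (pos : nat -> R) (n : nat -> nat) : Prop :=
  (forall k, (1 <= k)%nat -> (k < q)%nat -> pos k < pos (S k)) /\
  (forall j, (j < m)%nat -> exists k, (1 <= k <= q)%nat /\ x j = pos k) /\
  (forall k, (1 <= k <= q)%nat -> exists j, (j < m)%nat /\ x j = pos k) /\
  (forall k, (1 <= k <= q)%nat -> n k = n_at m x (pos k)).

Definition lenL (q : nat) (pos : nat -> R) (k : nat) : R :=
  if Nat.eqb k 1%nat then pos 1%nat - 0 else (pos k - pos (k - 1)%nat) / 2.
Definition lenR (q : nat) (pos : nat -> R) (k : nat) : R :=
  if Nat.eqb k q then 1 - pos q else (pos (S k) - pos k) / 2.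
Definition lenI (q : nat) (pos : nat -> R) (k : nat) : R :=
  lenL q pos k + lenR q pos k.

(* A candidate sharing her position with N - 1 others earns (length of the voters ranking
   that position first - c * length of those ranking it last) / N.

   Necessity: moving to the midpoint of two adjacent positions occupied by rivals earns their
   half gap, and moving just outside an extreme position earns, in the limit, the extreme
   half-electorate minus c times the length of the voters who would rank her last; every
   equilibrium payoff dominates these.  Comparing them with the actual payoffs forces at most
   two candidates per position, exactly two at each extreme, payoff I^p with equal
   half-electorates for paired candidates, and, since both extreme limits are attained, the
   symmetric conditions (iii).

   Sufficiency: every payoff is then at least I^p.  A deviation to t earns at most half the
   distance between the nearest rivals l < t < r; as no rival lies between them, either
   (l, r) is a single gap of half length at most I^p, or the deviator was alone between l
   and r and already earned (r - l) / 2.  A deviation onto a shared position splits a sum of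
   two such bounds among at least two candidates, and deviations onto or beyond the extreme
   positions are controlled by (iii). *)

From Pilot Require Import Defs.
From Stdlib Require Import Reals Lra Lia List ClassicalEpsilon FunctionalExtensionality.
Import ListNotations.
Open Scope R_scope.

Lemma IsStepFun_const_open (f : R -> R) (u w k : R) :
  u <= w -> (forall z, u < z < w -> f z = k) -> IsStepFun f u w.
Proof.
  intros Huw Hf. exists [u; w], [k].
  repeat split.
  - intros i Hi. simpl in Hi. replace i with 0%nat by lia. simpl. lra.
  - simpl. unfold Rmin. destruct (Rle_dec u w); lra.
  - simpl. unfold Rmax. destruct (Rle_dec u w); lra.
  - intros i Hi. simpl in Hi. replace i with 0%nat by lia.
    intros z Hz. unfold open_interval in Hz. simpl in Hz |- *. apply Hf; lra.
Qed.

Lemma Riemann_integrable_const_open (f : R -> R) (u w k : R) :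
  u <= w -> (forall z, u < z < w -> f z = k) -> Riemann_integrable f u w.
Proof.
  intros Huw Hf eps.
  exists (mkStepFun (IsStepFun_const_open f u w k Huw Hf)), (mkStepFun (StepFun_P4 u w 0)).
  split.
  - intros t _. simpl. unfold fct_cte. rewrite Rminus_diag, Rabs_R0. lra.
  - rewrite StepFun_P18, Rmult_0_l, Rabs_R0. apply cond_pos.
Qed.

Lemma RiemannInt_const_open (f : R -> R) (u w k : R) (pr : Riemann_integrable f u w) :
  u <= w -> (forall z, u < z < w -> f z = k) -> RiemannInt pr = k * (w - u).
Proof.
  intros Huw Hf.
  rewrite (RiemannInt_P18 pr (RiemannInt_P14 u w k) Huw).
  - apply RiemannInt_P15.
  - intros z Hz. apply Hf; lra.
Qed.

Lemma RiemannInt_indicator (h : R -> R) (a b k : R) :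
  0 <= a <= b -> b <= 1 ->
  (forall z, a < z < b -> h z = k) ->
  (forall z, 0 <= z < a \/ b < z <= 1 -> h z = 0) ->
  { pr : Riemann_integrable h 0 1 | RiemannInt pr = k * (b - a) }.
Proof.
  intros Hab Hb1 Hin Hout.
  assert (Hleft : forall z, 0 < z < a -> h z = 0) by (intros; apply Hout; lra).
  assert (Hright : forall z, b < z < 1 -> h z = 0) by (intros; apply Hout; lra).
  assert (Hab' : a <= b) by lra.
  pose (p1 := Riemann_integrable_const_open h 0 a 0 (proj1 Hab) Hleft).
  pose (p2 := Riemann_integrable_const_open h a b k Hab' Hin).
  pose (p3 := Riemann_integrable_const_open h b 1 0 Hb1 Hright).
  pose (p12 := RiemannInt_P24 p1 p2).
  exists (RiemannInt_P24 p12 p3).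
  rewrite <- (RiemannInt_P26 p12 p3), <- (RiemannInt_P26 p1 p2).
  rewrite (RiemannInt_const_open _ _ _ _ p1 (proj1 Hab) Hleft),
    (RiemannInt_const_open _ _ _ _ p2 Hab' Hin),
    (RiemannInt_const_open _ _ _ _ p3 Hb1 Hright).
  ring.
Qed.

Lemma integral01_RiemannInt (f : R -> R) (pr : Riemann_integrable f 0 1) :
  integral01 f = RiemannInt pr.
Proof.
  unfold integral01.
  destruct (excluded_middle_informative _) as [H|H].
  - apply RiemannInt_P5.
  - exfalso. apply H. exists pr. exact I.
Qed.

Section Ranking.

Variables (m : nat) (y : nat -> R) (i : nat) (z : R).

Lemma is_closest_true :
  (forall j, (j < m)%nat -> y j <> y i -> Rabs (y i - z) < Rabs (y j - z)) ->
  is_closest m y i z = true.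
Proof.
  intros H. apply forallb_forall. intros j Hj. apply in_seq in Hj. unfold Defs.dist.
  destruct (Rle_dec _ _) as [|Hn]; auto. exfalso. apply Hn.
  destruct (Req_EM_T (y j) (y i)) as [->|ne]; [lra|].
  left. apply H; [lia|auto].
Qed.

Lemma is_closest_false :
  (exists j, (j < m)%nat /\ Rabs (y j - z) < Rabs (y i - z)) ->
  is_closest m y i z = false.
Proof.
  intros [j [Hj Hlt]]. apply Bool.not_true_iff_false. intros E.
  apply forallb_forall with (x := j) in E; [|apply in_seq; lia].
  unfold Defs.dist in E. destruct (Rle_dec _ _); [lra|discriminate].
Qed.

Lemma is_farthest_true :
  (forall j, (j < m)%nat -> y j <> y i -> Rabs (y j - z) < Rabs (y i - z)) ->
  is_farthest m y i z = true.
Proof.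
  intros H. apply forallb_forall. intros j Hj. apply in_seq in Hj. unfold Defs.dist.
  destruct (Rle_dec _ _) as [|Hn]; auto. exfalso. apply Hn.
  destruct (Req_EM_T (y j) (y i)) as [->|ne]; [lra|].
  left. apply H; [lia|auto].
Qed.

Lemma is_farthest_false :
  (exists j, (j < m)%nat /\ Rabs (y i - z) < Rabs (y j - z)) ->
  is_farthest m y i z = false.
Proof.
  intros [j [Hj Hlt]]. apply Bool.not_true_iff_false. intros E.
  apply forallb_forall with (x := j) in E; [|apply in_seq; lia].
  unfold Defs.dist in E. destruct (Rle_dec _ _); [lra|discriminate].
Qed.

Lemma n_tied_n_at :
  (forall j, (j < m)%nat -> y j <> y i -> Rabs (y i - z) <> Rabs (y j - z)) ->
  n_tied m y i z = n_at m y (y i).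
Proof.
  intros H. unfold n_tied, n_at. f_equal. apply filter_ext_in.
  intros j Hj. apply in_seq in Hj. unfold Defs.dist.
  destruct (Req_EM_T (y j) (y i)) as [->|ne].
  - destruct (Req_EM_T _ _); auto.
  - destruct (Req_EM_T _ _) as [e|]; auto. exfalso. apply (H j); [lia|auto|auto].
Qed.

End Ranking.

(* Ties between distinct positions occur at finitely many voters only, which the integral
   ignores; elsewhere [i] is tied exactly with the candidates sharing her position. *)
Lemma v_from_regions m c y i Lend Rend lo hi :
  0 <= Lend <= Rend -> Rend <= 1 -> 0 <= lo <= hi -> hi <= 1 ->
  (forall z, Lend < z < Rend -> forall j, (j < m)%nat -> y j <> y i ->
     Rabs (y i - z) < Rabs (y j - z)) ->
  (forall z, 0 <= z <= 1 -> z < Lend \/ Rend < z ->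
     exists j, (j < m)%nat /\ Rabs (y j - z) < Rabs (y i - z)) ->
  (forall z, lo < z < hi -> forall j, (j < m)%nat -> y j <> y i ->
     Rabs (y j - z) < Rabs (y i - z)) ->
  (forall z, 0 <= z <= 1 -> z < lo \/ hi < z ->
     exists j, (j < m)%nat /\ Rabs (y i - z) < Rabs (y j - z)) ->
  v m c y i = ((Rend - Lend) - c * (hi - lo)) / INR (n_at m y (y i)).
Proof.
  intros HL HR Hlo Hhi HC1 HC2 HF1 HF2.
  set (N := n_at m y (y i)).
  set (h1 := fun z => if is_closest m y i z then / INR (n_tied m y i z) else 0).
  set (h2 := fun z => if is_farthest m y i z then / INR (n_tied m y i z) else 0).
  destruct (RiemannInt_indicator h1 Lend Rend (/ INR N)) as [pr1 E1]; auto.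
  { intros z Hz. unfold h1. rewrite is_closest_true by (apply HC1; auto).
    rewrite n_tied_n_at; auto. intros j Hj Hne. specialize (HC1 z Hz j Hj Hne). lra. }
  { intros z Hz. unfold h1. rewrite is_closest_false; auto. apply HC2; lra. }
  destruct (RiemannInt_indicator h2 lo hi (/ INR N)) as [pr2 E2]; auto.
  { intros z Hz. unfold h2. rewrite is_farthest_true by (apply HF1; auto).
    rewrite n_tied_n_at; auto. intros j Hj Hne. specialize (HF1 z Hz j Hj Hne). lra. }
  { intros z Hz. unfold h2. rewrite is_farthest_false; auto. apply HF2; lra. }
  assert (Hscore : voter_score m c y i = fun z => h1 z + (- c) * h2 z).
  { apply functional_extensionality. intro z. unfold voter_score, h1, h2. ring. }
  unfold v. rewrite Hscore, (integral01_RiemannInt _ (RiemannInt_P10 (- c) pr1 pr2)).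
  rewrite (RiemannInt_P13 pr1 pr2), E1, E2. unfold Rdiv. ring.
Qed.

Ltac solve_Rabs := repeat match goal with |- context [Rabs ?e] =>
  let H := fresh in destruct (Rcase_abs e) as [H|H];
  [rewrite (Rabs_left e H)|rewrite (Rabs_right e H)] end; lra.

Section Regions.

Variables (m : nat) (y : nat -> R) (a : R).

(* Position [a] is ranked first exactly by the voters in (Lend, Rend) and last exactly by
   those in (lo, hi); the latter interval is encoded as (0, 0) when [a] is not extreme. *)
Definition left_end (Lend : R) : Prop :=
  (exists l, (exists j, (j < m)%nat /\ y j = l) /\ l < a /\
     (forall j, (j < m)%nat -> y j < a -> y j <= l) /\ Lend = (l + a) / 2) \/
  ((forall j, (j < m)%nat -> a <= y j) /\ Lend = 0).

Definition right_end (Rend : R) : Prop :=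
  (exists r, (exists j, (j < m)%nat /\ y j = r) /\ a < r /\
     (forall j, (j < m)%nat -> a < y j -> r <= y j) /\ Rend = (a + r) / 2) \/
  ((forall j, (j < m)%nat -> y j <= a) /\ Rend = 1).

Definition last_region (lo hi : R) : Prop :=
  ((exists j, (j < m)%nat /\ y j < a) /\ (exists j, (j < m)%nat /\ a < y j) /\ lo = 0 /\ hi = 0)
  \/ ((forall j, (j < m)%nat -> a <= y j) /\
      (exists mx, (exists j, (j < m)%nat /\ y j = mx) /\ a < mx /\
         (forall j, (j < m)%nat -> y j <= mx) /\ lo = (a + mx) / 2) /\ hi = 1)
  \/ ((forall j, (j < m)%nat -> y j <= a) /\
      (exists mn, (exists j, (j < m)%nat /\ y j = mn) /\ mn < a /\
         (forall j, (j < m)%nat -> mn <= y j) /\ hi = (mn + a) / 2) /\ lo = 0)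
  \/ ((forall j, (j < m)%nat -> y j = a) /\ lo = 0 /\ hi = 1).

Hypothesis Hy : forall j, (j < m)%nat -> 0 <= y j <= 1.
Hypothesis Ha : 0 <= a <= 1.

Lemma left_end_bounds Lend : left_end Lend -> 0 <= Lend <= a.
Proof.
  intros [[l [[j [Hj <-]] [Hla [_ ->]]]]|[_ ->]]; [specialize (Hy j Hj)|]; lra.
Qed.

Lemma right_end_bounds Rend : right_end Rend -> a <= Rend <= 1.
Proof.
  intros [[r [[j [Hj <-]] [Har [_ ->]]]]|[_ ->]]; [specialize (Hy j Hj)|]; lra.
Qed.

Lemma last_region_bounds lo hi : last_region lo hi -> 0 <= lo <= hi /\ hi <= 1.
Proof.
  intros [[_ [_ [-> ->]]]|[[_ [[mx [[j [Hj <-]] [_ [_ ->]]]] ->]]|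
          [[_ [[mn [[j [Hj <-]] [_ [_ ->]]]] ->]]|[_ [-> ->]]]]];
  try specialize (Hy j Hj); lra.
Qed.

Lemma closest_inside Lend Rend z j : left_end Lend -> right_end Rend -> Lend < z < Rend ->
  (j < m)%nat -> y j <> a -> Rabs (a - z) < Rabs (y j - z).
Proof.
  intros HL HR Hz Hj Hne.
  destruct (Rlt_dec (y j) a) as [Hlt|Hge].
  - destruct HL as [[l [_ [_ [Hmax ->]]]]|[Hall _]].
    + specialize (Hmax j Hj Hlt). solve_Rabs.
    + specialize (Hall j Hj). lra.
  - destruct HR as [[r [_ [_ [Hmin ->]]]]|[Hall _]].
    + specialize (Hmin j Hj ltac:(lra)). solve_Rabs.
    + specialize (Hall j Hj). lra.
Qed.

Lemma rival_closer_outside Lend Rend z : left_end Lend -> right_end Rend ->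
  0 <= z <= 1 -> z < Lend \/ Rend < z ->
  exists j, (j < m)%nat /\ Rabs (y j - z) < Rabs (a - z).
Proof.
  intros HL HR Hz [Hzl|Hzr].
  - destruct HL as [[l [[j [Hj <-]] [Hla [_ ->]]]]|[_ ->]]; [|lra].
    exists j. split; auto. solve_Rabs.
  - destruct HR as [[r [[j [Hj <-]] [Har [_ ->]]]]|[_ ->]]; [|lra].
    exists j. split; auto. solve_Rabs.
Qed.

Lemma farthest_inside lo hi z j : last_region lo hi -> lo < z < hi ->
  (j < m)%nat -> y j <> a -> Rabs (y j - z) < Rabs (a - z).
Proof.
  intros HF Hz Hj Hne.
  destruct HF as [[_ [_ [-> ->]]]|[[Hall [[mx [_ [_ [Hmx ->]]]] ->]]|
                  [[Hall [[mn [_ [_ [Hmn ->]]]] ->]]|[Hall _]]]].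
  - lra.
  - specialize (Hall j Hj). specialize (Hmx j Hj). solve_Rabs.
  - specialize (Hall j Hj). specialize (Hmn j Hj). solve_Rabs.
  - specialize (Hall j Hj). contradiction.
Qed.

Lemma rival_farther_outside lo hi z : last_region lo hi ->
  0 <= z <= 1 -> z < lo \/ hi < z ->
  exists j, (j < m)%nat /\ Rabs (a - z) < Rabs (y j - z).
Proof.
  intros HF Hz Hzo.
  destruct HF as [[[j1 [Hj1 H1]] [[j2 [Hj2 H2]] [-> ->]]]|
                  [[_ [[mx [[j [Hj <-]] [Ham [_ ->]]]] ->]]|
                  [[_ [[mn [[j [Hj <-]] [Ham [_ ->]]]] ->]]|[_ [-> ->]]]]].
  - destruct (Rle_dec z a); [exists j2|exists j1]; split; auto; solve_Rabs.
  - exists j. split; auto. destruct Hzo; [solve_Rabs|lra].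
  - exists j. split; auto. destruct Hzo; [lra|solve_Rabs].
  - lra.
Qed.

End Regions.

Lemma v_regions m c y i Lend Rend lo hi :
  (i < m)%nat -> (forall j, (j < m)%nat -> 0 <= y j <= 1) ->
  left_end m y (y i) Lend -> right_end m y (y i) Rend -> last_region m y (y i) lo hi ->
  v m c y i = ((Rend - Lend) - c * (hi - lo)) / INR (n_at m y (y i)).
Proof.
  intros Hi Hy HL HR HF.
  pose proof (Hy i Hi) as Ha.
  pose proof (left_end_bounds m y (y i) Hy Ha Lend HL).
  pose proof (right_end_bounds m y (y i) Hy Ha Rend HR).
  pose proof (last_region_bounds m y (y i) Hy Ha lo hi HF).
  apply v_from_regions; try lra.
  - intros z Hz j Hj Hne. apply (closest_inside m y (y i) Lend Rend); auto.
  - intros z Hz Hzo. apply (rival_closer_outside m y (y i) Lend Rend); auto.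
  - intros z Hz j Hj Hne. apply (farthest_inside m y (y i) lo hi); auto.
  - intros z Hz Hzo. apply (rival_farther_outside m y (y i) lo hi); auto.
Qed.

Section Multiplicity.

Variables (m : nat) (y : nat -> R) (a : R).

Let occupants := filter (fun j => if Req_EM_T (y j) a then true else false) (seq 0 m).

Lemma In_occupants j : In j occupants <-> (j < m)%nat /\ y j = a.
Proof.
  unfold occupants. rewrite filter_In, in_seq.
  destruct (Req_EM_T (y j) a); split; intros [? ?]; try split; auto; try lia; congruence.
Qed.

Lemma NoDup_occupants : NoDup occupants.
Proof. apply NoDup_filter, seq_NoDup. Qed.

Lemma n_at_ge1 j : (j < m)%nat -> y j = a -> (1 <= n_at m y a)%nat.
Proof.
  intros Hj Hy. apply (NoDup_incl_length (l := [j])).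
  - repeat constructor. intros [].
  - intros k [<-|[]]. apply In_occupants; auto.
Qed.

Lemma n_at_ge2 j1 j2 : (j1 < m)%nat -> (j2 < m)%nat -> j1 <> j2 ->
  y j1 = a -> y j2 = a -> (2 <= n_at m y a)%nat.
Proof.
  intros H1 H2 Hne Hy1 Hy2.
  apply (NoDup_incl_length (l := [j1; j2])).
  - constructor; [intros [E|[]]; auto|]. constructor; [intros []|constructor].
  - intros k [<-|[<-|[]]]; apply In_occupants; auto.
Qed.

Lemma n_at_le1 i : (forall j, (j < m)%nat -> y j = a -> j = i) -> (n_at m y a <= 1)%nat.
Proof.
  intros H. apply (NoDup_incl_length (l' := [i]) NoDup_occupants).
  intros j Hj. apply In_occupants in Hj. left. symmetry. apply H; apply Hj.
Qed.

Lemma n_at_ge2_other i : (2 <= n_at m y a)%nat ->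
  exists j, (j < m)%nat /\ j <> i /\ y j = a.
Proof.
  intros H. pose proof NoDup_occupants as Hnd. unfold n_at in H. fold occupants in H.
  destruct occupants as [|j1 [|j2 l]] eqn:E; simpl in H; try lia.
  apply NoDup_cons_iff in Hnd as [Hj12 _].
  assert (In1 : In j1 occupants) by (rewrite E; left; auto).
  assert (In2 : In j2 occupants) by (rewrite E; right; left; auto).
  apply In_occupants in In1, In2.
  destruct (Nat.eq_dec j1 i) as [->|]; [exists j2|exists j1]; repeat split; try apply In1;
    try apply In2; auto.
  intros ->. apply Hj12. left. auto.
Qed.

Lemma n_at_eq1 i : (i < m)%nat -> y i = a ->
  (forall j, (j < m)%nat -> j <> i -> y j <> a) -> n_at m y a = 1%nat.
Proof.
  intros Hi Hy H. apply Nat.le_antisymm.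
  - apply (n_at_le1 i). intros j Hj Hyj. destruct (Nat.eq_dec j i); auto.
    exfalso. apply (H j); auto.
  - apply (n_at_ge1 i); auto.
Qed.

End Multiplicity.

Lemma n_at_S m y a : n_at (S m) y a = (n_at m y a + if Req_EM_T (y m) a then 1 else 0)%nat.
Proof.
  unfold n_at. rewrite seq_S, filter_app, length_app. simpl.
  destruct (Req_EM_T (y m) a); simpl; lia.
Qed.

Lemma n_at_ext m y y' a : (forall j, (j < m)%nat -> y j = y' j) -> n_at m y a = n_at m y' a.
Proof.
  intros H. unfold n_at. f_equal. apply filter_ext_in.
  intros j Hj. apply in_seq in Hj. rewrite H by lia. reflexivity.
Qed.

Lemma deviate_same x i t : deviate x i t i = t.
Proof. unfold deviate. rewrite Nat.eqb_refl. auto. Qed.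

Lemma deviate_other x i t j : j <> i -> deviate x i t j = x j.
Proof. intros H. unfold deviate. destruct (Nat.eqb_spec j i); auto; lia. Qed.

Lemma deviate_id x i : deviate x i (x i) = x.
Proof.
  apply functional_extensionality. intro j. unfold deviate.
  destruct (Nat.eqb_spec j i); subst; auto.
Qed.

Lemma n_at_deviate_new m x i t : (i < m)%nat -> x i <> t ->
  n_at m (deviate x i t) t = S (n_at m x t).
Proof.
  induction m; intros Hi Hx; [lia|]. rewrite !n_at_S.
  destruct (Nat.eq_dec i m) as [->|].
  - rewrite (n_at_ext m (deviate x m t) x) by (intros j Hj; apply deviate_other; lia).
    rewrite deviate_same.
    destruct (Req_EM_T t t); [|congruence]. destruct (Req_EM_T (x m) t); [contradiction|]. lia.
  - rewrite IHm, deviate_other by (auto; lia). lia.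
Qed.

Definition rival (m i j : nat) : Prop := (j < m)%nat /\ j <> i.

Definition half_gap (pos : nat -> R) (u : nat) : R := (pos (S u) - pos u) / 2.

Section Decomposition.

Context {m : nat} {x : nat -> R} {q : nat} {pos : nat -> R} {n : nat -> nat}.
Hypothesis Hdec : decomposition m x q pos n.

Lemma pos_lt u w : (1 <= u)%nat -> (u < w)%nat -> (w <= q)%nat -> pos u < pos w.
Proof.
  destruct Hdec as [Hinc _]. intros Hu Huw Hw. induction Huw as [|w Huw IH].
  - apply Hinc; lia.
  - apply Rlt_trans with (pos w); [apply IH; lia|apply Hinc; lia].
Qed.

Lemma pos_le u w : (1 <= u)%nat -> (u <= w)%nat -> (w <= q)%nat -> pos u <= pos w.
Proof.
  intros H1 H2 H3. destruct (Nat.eq_dec u w) as [->|]; [lra|].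
  left. apply pos_lt; lia.
Qed.

Lemma pos_inj u w : (1 <= u <= q)%nat -> (1 <= w <= q)%nat -> pos u = pos w -> u = w.
Proof.
  intros Hu Hw E. destruct (Nat.lt_total u w) as [l|[e|l]]; auto;
    [pose proof (pos_lt u w ltac:(lia) l ltac:(lia))
    |pose proof (pos_lt w u ltac:(lia) l ltac:(lia))];
    lra.
Qed.

Lemma occupied_pos j : (j < m)%nat -> exists k, (1 <= k <= q)%nat /\ x j = pos k.
Proof. apply Hdec. Qed.

Lemma pos_occupied k : (1 <= k <= q)%nat -> exists j, (j < m)%nat /\ x j = pos k.
Proof. apply Hdec. Qed.

Lemma n_eq_n_at k : (1 <= k <= q)%nat -> n k = n_at m x (pos k).
Proof. apply Hdec. Qed.

Lemma pos_bounds : is_profile m x -> forall k, (1 <= k <= q)%nat -> 0 <= pos k <= 1.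
Proof.
  intros Hx k Hk. destruct (pos_occupied k Hk) as [j [Hj <-]]. apply Hx; auto.
Qed.

Lemma below_pos_le_pred j k : (j < m)%nat -> (1 <= k <= q)%nat -> x j < pos k ->
  (2 <= k)%nat /\ x j <= pos (k - 1).
Proof.
  intros Hj Hk Hlt. destruct (occupied_pos j Hj) as [k' [Hk' E]]. rewrite E in *.
  destruct (Nat.lt_ge_cases k' k).
  - split; [lia|]. apply pos_le; lia.
  - pose proof (pos_le k k' ltac:(lia) H ltac:(lia)). lra.
Qed.

Lemma above_pos_ge_succ j k : (j < m)%nat -> (1 <= k <= q)%nat -> pos k < x j ->
  (k < q)%nat /\ pos (S k) <= x j.
Proof.
  intros Hj Hk Hlt. destruct (occupied_pos j Hj) as [k' [Hk' E]]. rewrite E in *.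
  destruct (Nat.lt_ge_cases k k').
  - split; [lia|]. apply pos_le; lia.
  - pose proof (pos_le k' k ltac:(lia) H ltac:(lia)). lra.
Qed.

Lemma pos_first_le j : (1 <= q)%nat -> (j < m)%nat -> pos 1 <= x j.
Proof.
  intros Hq Hj. destruct (occupied_pos j Hj) as [k [Hk ->]]. apply pos_le; lia.
Qed.

Lemma le_pos_last j : (1 <= q)%nat -> (j < m)%nat -> x j <= pos q.
Proof.
  intros Hq Hj. destruct (occupied_pos j Hj) as [k [Hk ->]]. apply pos_le; lia.
Qed.

Lemma n_ge1 k : (1 <= k <= q)%nat -> (1 <= n k)%nat.
Proof.
  intros Hk. rewrite n_eq_n_at by auto. destruct (pos_occupied k Hk) as [j [Hj E]].
  apply (n_at_ge1 m x _ j); auto.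
Qed.

Lemma n_eq1_unique k i j : (1 <= k <= q)%nat -> n k = 1%nat ->
  (i < m)%nat -> (j < m)%nat -> x i = pos k -> x j = pos k -> j = i.
Proof.
  intros Hk Hn Hi Hj Ei Ej. destruct (Nat.eq_dec j i) as [|Hne]; auto. exfalso.
  pose proof (n_at_ge2 m x (pos k) j i Hj Hi Hne Ej Ei). rewrite <- n_eq_n_at in H; lia.
Qed.

Lemma rival_at_shared i k : (1 <= k <= q)%nat -> (2 <= n k)%nat ->
  exists j, rival m i j /\ x j = pos k.
Proof.
  intros Hk Hn. rewrite n_eq_n_at in Hn by auto.
  destruct (n_at_ge2_other m x (pos k) i Hn) as [j [Hj [Hne E]]]. exists j. repeat split; auto.
Qed.

Lemma rival_at_other i k k' : (1 <= k <= q)%nat -> (1 <= k' <= q)%nat ->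
  x i = pos k' -> k <> k' -> exists j, rival m i j /\ x j = pos k.
Proof.
  intros Hk Hk' Ei Hne. destruct (pos_occupied k Hk) as [j [Hj E]]. exists j. repeat split; auto.
  intros ->. apply Hne, pos_inj; congruence.
Qed.

Lemma rival_at i k k' : (1 <= k <= q)%nat -> (1 <= k' <= q)%nat -> x i = pos k' ->
  k <> k' \/ (2 <= n k')%nat -> exists j, rival m i j /\ x j = pos k.
Proof.
  intros Hk Hk' Ei Hk'n. destruct (Nat.eq_dec k k') as [->|Hne].
  - apply rival_at_shared; auto. destruct Hk'n; [congruence|auto].
  - apply (rival_at_other i k k'); auto.
Qed.

Lemma half_gap_pos u : (1 <= u < q)%nat -> 0 < half_gap pos u.
Proof.
  intros Hu. unfold half_gap. pose proof (pos_lt u (S u) ltac:(lia) ltac:(lia) ltac:(lia)). lra.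
Qed.

End Decomposition.

Section Deviation.

Variables (m : nat) (x : nat -> R) (i : nat) (t : R).
Hypothesis Hi : (i < m)%nat.
Let y := deviate x i t.

Lemma deviate_forall (P : R -> Prop) : P t -> (forall j, rival m i j -> P (x j)) ->
  forall j, (j < m)%nat -> P (y j).
Proof.
  intros Ht H j Hj. unfold y.
  destruct (Nat.eq_dec j i) as [->|Hne]; [rewrite deviate_same|rewrite deviate_other by auto];
    [|apply H; split]; auto.
Qed.

Lemma deviate_rival_exists a : (exists j, rival m i j /\ x j = a) ->
  exists j, (j < m)%nat /\ y j = a.
Proof. intros [j [[Hj Hne] E]]. exists j. unfold y. rewrite deviate_other; auto. Qed.

Lemma left_end_deviate l : l < t -> (exists j, rival m i j /\ x j = l) ->
  (forall j, rival m i j -> x j < t -> x j <= l) -> left_end m y t ((l + t) / 2).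
Proof.
  intros Hlt Hl Hmax. left. exists l. repeat split; auto.
  - apply deviate_rival_exists; auto.
  - apply (deviate_forall (fun z => z < t -> z <= l)); auto. lra.
Qed.

Lemma left_end_deviate_leftmost : (forall j, rival m i j -> t <= x j) -> left_end m y t 0.
Proof.
  intros Hall. right. split; auto. apply (deviate_forall (fun z => t <= z)); auto. lra.
Qed.

Lemma right_end_deviate r : t < r -> (exists j, rival m i j /\ x j = r) ->
  (forall j, rival m i j -> t < x j -> r <= x j) -> right_end m y t ((t + r) / 2).
Proof.
  intros Hlt Hr Hmin. left. exists r. repeat split; auto.
  - apply deviate_rival_exists; auto.
  - apply (deviate_forall (fun z => t < z -> r <= z)); auto. lra.
Qed.

Lemma right_end_deviate_rightmost : (forall j, rival m i j -> x j <= t) -> right_end m y t 1.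
Proof.
  intros Hall. right. split; auto. apply (deviate_forall (fun z => z <= t)); auto. lra.
Qed.

Lemma n_at_deviate_alone : (forall j, rival m i j -> x j <> t) -> n_at m y t = 1%nat.
Proof.
  intros H. apply (n_at_eq1 m y t i Hi (deviate_same x i t)). intros j Hj Hne.
  unfold y. rewrite deviate_other by auto. apply H; split; auto.
Qed.

Lemma n_at_deviate_joined j : rival m i j -> x j = t -> (2 <= n_at m y t)%nat.
Proof.
  intros [Hj Hne] E. apply (n_at_ge2 m y t i j); auto.
  - apply deviate_same.
  - unfold y. rewrite deviate_other; auto.
Qed.

Hypothesis Hx : is_profile m x.
Hypothesis Ht : 0 <= t <= 1.

Lemma deviate_profile : forall j, (j < m)%nat -> 0 <= y j <= 1.
Proof. apply (deviate_forall (fun z => 0 <= z <= 1)); auto. intros j [Hj _]. apply Hx; auto. Qed.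

Lemma last_region_deviate_interior l r : l < t < r ->
  (exists j, rival m i j /\ x j = l) -> (exists j, rival m i j /\ x j = r) ->
  last_region m y t 0 0.
Proof.
  intros Hlr Hl Hr. left.
  destruct (deviate_rival_exists l Hl) as [jl [Hjl El]].
  destruct (deviate_rival_exists r Hr) as [jr [Hjr Er]].
  repeat split; [exists jl|exists jr]; split; auto; lra.
Qed.

Lemma last_region_deviate_leftmost mx : t < mx ->
  (forall j, rival m i j -> t <= x j) ->
  (exists j, rival m i j /\ x j = mx) -> (forall j, rival m i j -> x j <= mx) ->
  last_region m y t ((t + mx) / 2) 1.
Proof.
  intros Hlt Hall Hmx Hmax. right; left. repeat split.
  - apply (deviate_forall (fun z => t <= z)); auto. lra.
  - exists mx. repeat split; auto.
    + apply deviate_rival_exists; auto.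
    + apply (deviate_forall (fun z => z <= mx)); auto. lra.
Qed.

Lemma last_region_deviate_rightmost mn : mn < t ->
  (forall j, rival m i j -> x j <= t) ->
  (exists j, rival m i j /\ x j = mn) -> (forall j, rival m i j -> mn <= x j) ->
  last_region m y t 0 ((mn + t) / 2).
Proof.
  intros Hlt Hall Hmn Hmin. right; right; left. repeat split.
  - apply (deviate_forall (fun z => z <= t)); auto. lra.
  - exists mn. repeat split; auto.
    + apply deviate_rival_exists; auto.
    + apply (deviate_forall (fun z => mn <= z)); auto. lra.
Qed.

End Deviation.

Section DeviationPayoff.

Variables (m : nat) (c : R) (x : nat -> R) (i : nat) (t : R).
Hypotheses (Hi : (i < m)%nat) (Hx : is_profile m x) (Ht : 0 <= t <= 1).

Lemma v_deviate Lend Rend lo hi :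
  left_end m (deviate x i t) t Lend -> right_end m (deviate x i t) t Rend ->
  last_region m (deviate x i t) t lo hi ->
  v m c (deviate x i t) i = ((Rend - Lend) - c * (hi - lo)) / INR (n_at m (deviate x i t) t).
Proof.
  intros HL HR HF. set (y := deviate x i t) in *.
  rewrite <- (deviate_same x i t) in HL, HR, HF |- *.
  apply v_regions; auto. apply deviate_profile; auto.
Qed.

Lemma v_deviate_between l r : l < t < r ->
  (exists j, rival m i j /\ x j = l) -> (exists j, rival m i j /\ x j = r) ->
  (forall j, rival m i j -> x j < t -> x j <= l) ->
  (forall j, rival m i j -> t < x j -> r <= x j) ->
  v m c (deviate x i t) i = ((r - l) / 2) / INR (n_at m (deviate x i t) t).
Proof.
  intros Hlr Hl Hr Hmax Hmin.
  rewrite (v_deviate ((l + t) / 2) ((t + r) / 2) 0 0).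
  - unfold Rdiv. ring.
  - apply left_end_deviate; auto. lra.
  - apply right_end_deviate; auto. lra.
  - apply (last_region_deviate_interior m x i t l r); auto.
Qed.

Lemma v_deviate_leftmost r mx : t < r -> t < mx ->
  (forall j, rival m i j -> t <= x j) ->
  (exists j, rival m i j /\ x j = r) -> (forall j, rival m i j -> t < x j -> r <= x j) ->
  (exists j, rival m i j /\ x j = mx) -> (forall j, rival m i j -> x j <= mx) ->
  v m c (deviate x i t) i
  = ((t + r) / 2 - c * (1 - (t + mx) / 2)) / INR (n_at m (deviate x i t) t).
Proof.
  intros Htr Htm Hall Hr Hmin Hmx Hmax.
  rewrite (v_deviate 0 ((t + r) / 2) ((t + mx) / 2) 1).
  - unfold Rdiv. ring.
  - apply left_end_deviate_leftmost; auto.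
  - apply right_end_deviate; auto.
  - apply last_region_deviate_leftmost; auto.
Qed.

Lemma v_deviate_rightmost l mn : l < t -> mn < t ->
  (forall j, rival m i j -> x j <= t) ->
  (exists j, rival m i j /\ x j = l) -> (forall j, rival m i j -> x j < t -> x j <= l) ->
  (exists j, rival m i j /\ x j = mn) -> (forall j, rival m i j -> mn <= x j) ->
  v m c (deviate x i t) i
  = ((1 - (l + t) / 2) - c * ((mn + t) / 2)) / INR (n_at m (deviate x i t) t).
Proof.
  intros Hlt Hmt Hall Hl Hmax Hmn Hmin.
  rewrite (v_deviate ((l + t) / 2) 1 0 ((mn + t) / 2)).
  - unfold Rdiv. ring.
  - apply left_end_deviate; auto.
  - apply right_end_deviate_rightmost; auto.
  - apply last_region_deviate_rightmost; auto.
Qed.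

End DeviationPayoff.

Section ProfilePayoff.

Context {m : nat} (c : R) {x : nat -> R} {q : nat} {pos : nat -> R} {n : nat -> nat}.
Hypotheses (Hx : is_profile m x) (Hdec : decomposition m x q pos n) (Hq : (2 <= q)%nat).
Context {i : nat} (Hi : (i < m)%nat).

Lemma left_end_at_pos k : (1 < k <= q)%nat -> x i = pos k ->
  left_end m x (x i) ((pos (k - 1) + pos k) / 2).
Proof.
  intros Hk Ei. left. exists (pos (k - 1)). rewrite Ei. repeat split.
  - apply (pos_occupied Hdec); lia.
  - apply (pos_lt Hdec); lia.
  - intros j Hj Hlt. apply (below_pos_le_pred Hdec j k Hj ltac:(lia) Hlt).
Qed.

Lemma right_end_at_pos k : (1 <= k < q)%nat -> x i = pos k ->
  right_end m x (x i) ((pos k + pos (S k)) / 2).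
Proof.
  intros Hk Ei. left. exists (pos (S k)). rewrite Ei. repeat split.
  - apply (pos_occupied Hdec); lia.
  - apply (pos_lt Hdec); lia.
  - intros j Hj Hlt. apply (above_pos_ge_succ Hdec j k Hj ltac:(lia) Hlt).
Qed.

Lemma v_at_first : x i = pos 1 ->
  v m c x i = ((pos 1 + pos 2) / 2 - c * (1 - (pos 1 + pos q) / 2)) / INR (n 1).
Proof.
  intros Ei.
  assert (Hfirst : forall j, (j < m)%nat -> pos 1 <= x j)
    by (intros; apply (pos_first_le Hdec); auto; lia).
  rewrite (v_regions m c x i 0 ((pos 1 + pos 2) / 2) ((pos 1 + pos q) / 2) 1); auto.
  - rewrite Ei, (n_eq_n_at Hdec 1) by lia. unfold Rdiv. ring.
  - right. rewrite Ei. auto.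
  - apply (right_end_at_pos 1); auto; lia.
  - right; left. rewrite Ei. repeat split; auto. exists (pos q). repeat split.
    + apply (pos_occupied Hdec); lia.
    + apply (pos_lt Hdec); lia.
    + intros j Hj. apply (le_pos_last Hdec); auto; lia.
Qed.

Lemma v_at_last : x i = pos q ->
  v m c x i = ((1 - (pos (q - 1) + pos q) / 2) - c * ((pos 1 + pos q) / 2)) / INR (n q).
Proof.
  intros Ei.
  assert (Hlast : forall j, (j < m)%nat -> x j <= pos q)
    by (intros; apply (le_pos_last Hdec); auto; lia).
  rewrite (v_regions m c x i ((pos (q - 1) + pos q) / 2) 1 0 ((pos 1 + pos q) / 2)); auto.
  - rewrite Ei, (n_eq_n_at Hdec q) by lia. unfold Rdiv. ring.
  - apply (left_end_at_pos q); auto; lia.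
  - right. rewrite Ei. auto.
  - right; right; left. rewrite Ei. repeat split; auto. exists (pos 1). repeat split.
    + apply (pos_occupied Hdec); lia.
    + apply (pos_lt Hdec); lia.
    + intros j Hj. apply (pos_first_le Hdec); auto; lia.
Qed.

Lemma v_at_interior k : (1 < k < q)%nat -> x i = pos k ->
  v m c x i = (half_gap pos (k - 1) + half_gap pos k) / INR (n k).
Proof.
  intros Hk Ei.
  rewrite (v_regions m c x i ((pos (k - 1) + pos k) / 2) ((pos k + pos (S k)) / 2) 0 0); auto.
  - rewrite Ei, (n_eq_n_at Hdec k) by lia. unfold half_gap.
    replace (S (k - 1)) with k by lia. unfold Rdiv. ring.
  - apply left_end_at_pos; auto; lia.
  - apply right_end_at_pos; auto; lia.
  - left. rewrite Ei. repeat split.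
    + destruct (pos_occupied Hdec 1) as [j [Hj E]]; [lia|].
      exists j. split; auto. rewrite E. apply (pos_lt Hdec); lia.
    + destruct (pos_occupied Hdec q) as [j [Hj E]]; [lia|].
      exists j. split; auto. rewrite E. apply (pos_lt Hdec); lia.
Qed.

End ProfilePayoff.

Section KeyDeviations.

Context {m : nat} (c : R) {x : nat -> R} {q : nat} {pos : nat -> R} {n : nat -> nat}.
Hypotheses (Hx : is_profile m x) (Hdec : decomposition m x q pos n) (Hq : (2 <= q)%nat).

Context {i : nat} (Hi : (i < m)%nat).
Hypotheses (H1 : exists j, rival m i j /\ x j = pos 1)
  (Hlast : exists j, rival m i j /\ x j = pos q).

Lemma v_deviate_midpoint u : (1 <= u < q)%nat ->
  (exists j, rival m i j /\ x j = pos u) -> (exists j, rival m i j /\ x j = pos (S u)) ->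
  v m c (deviate x i ((pos u + pos (S u)) / 2)) i = half_gap pos u.
Proof.
  intros Hu Hl Hr.
  assert (Hlt : pos u < pos (S u)) by (apply (pos_lt Hdec); lia).
  pose proof (pos_bounds Hdec Hx u ltac:(lia)).
  pose proof (pos_bounds Hdec Hx (S u) ltac:(lia)).
  assert (Hgap : forall j, (j < m)%nat -> x j <= pos u \/ pos (S u) <= x j).
  { intros j Hj. destruct (Rle_dec (pos (S u)) (x j)) as [|Hb]; [right; auto|left].
    destruct (below_pos_le_pred Hdec j (S u) Hj ltac:(lia) ltac:(lra)) as [_ A].
    replace (S u - 1)%nat with u in A by lia. auto. }
  rewrite (v_deviate_between m c x i ((pos u + pos (S u)) / 2) Hi Hx ltac:(lra)
    (pos u) (pos (S u)));
    auto; try lra.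
  - rewrite n_at_deviate_alone, INR_1; auto.
    + unfold half_gap. field.
    + intros j [Hj _] E. destruct (Hgap j Hj); lra.
  - intros j [Hj _] Hlt'. destruct (Hgap j Hj); lra.
  - intros j [Hj _] Hlt'. destruct (Hgap j Hj); lra.
Qed.

Lemma v_deviate_left_of_first t : 0 <= t < pos 1 ->
  v m c (deviate x i t) i = (t + pos 1) / 2 - c * (1 - (t + pos q) / 2).
Proof.
  intros Ht.
  assert (Hp1q : pos 1 < pos q) by (apply (pos_lt Hdec); lia).
  pose proof (pos_bounds Hdec Hx q ltac:(lia)).
  assert (Hfirst : forall j, rival m i j -> pos 1 <= x j)
    by (intros j [Hj _]; apply (pos_first_le Hdec); auto; lia).
  rewrite (v_deviate_leftmost m c x i t Hi Hx ltac:(lra) (pos 1) (pos q)); auto; try lra.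
  - rewrite n_at_deviate_alone by (auto; intros j Hj E; specialize (Hfirst j Hj); lra).
    rewrite INR_1. field.
  - intros j Hj. specialize (Hfirst j Hj). lra.
  - intros j [Hj _]. apply (le_pos_last Hdec); auto; lia.
Qed.

Lemma v_deviate_right_of_last t : pos q < t <= 1 ->
  v m c (deviate x i t) i = (1 - (pos q + t) / 2) - c * ((pos 1 + t) / 2).
Proof.
  intros Ht.
  assert (Hp1q : pos 1 < pos q) by (apply (pos_lt Hdec); lia).
  pose proof (pos_bounds Hdec Hx 1 ltac:(lia)).
  assert (Hle_last : forall j, rival m i j -> x j <= pos q)
    by (intros j [Hj _]; apply (le_pos_last Hdec); auto; lia).
  rewrite (v_deviate_rightmost m c x i t Hi Hx ltac:(lra) (pos q) (pos 1)); auto; try lra.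
  - rewrite n_at_deviate_alone by (auto; intros j Hj E; specialize (Hle_last j Hj); lra).
    rewrite INR_1. field.
  - intros j Hj. specialize (Hle_last j Hj). lra.
  - intros j [Hj _]. apply (pos_first_le Hdec); auto; lia.
Qed.

End KeyDeviations.

Lemma le_of_le_sub_small (A V K D : R) : 0 < D -> 0 <= K ->
  (forall d, 0 < d <= D -> A - K * d <= V) -> A <= V.
Proof.
  intros HD HK H. destruct (Rle_dec A V) as [|HAV]; auto. exfalso.
  set (d := Rmin D ((A - V) / (K + 1))).
  assert (Hd : 0 < d <= D).
  { split; [apply Rmin_pos; [lra|apply Rdiv_lt_0_compat; lra]|apply Rmin_l]. }
  assert (HKd : K * d < A - V).
  { apply Rle_lt_trans with (K * ((A - V) / (K + 1))).
    - apply Rmult_le_compat_l; [lra|apply Rmin_r].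
    - apply Rmult_lt_reg_r with (K + 1); [lra|].
      replace (K * ((A - V) / (K + 1)) * (K + 1)) with (K * (A - V)) by (field; lra). nra. }
  specialize (H d Hd). lra.
Qed.

Lemma n_le_2_of_share (V X : R) (N : nat) : V = X / INR N -> X <= 2 * V -> 0 < V -> (N <= 2)%nat.
Proof.
  intros E HX HV. destruct (Nat.le_gt_cases N 2) as [|HN]; auto. exfalso.
  apply lt_INR in HN. replace (INR 2) with 2 in HN by (simpl; lra).
  assert (X = V * INR N) by (rewrite E; field; lra). nra.
Qed.

Lemma share_le (V X : R) (N : nat) : (1 <= N)%nat -> X <= INR N * V -> X / INR N <= V.
Proof.
  intros HN HX. assert (HN' : 0 < INR N) by (apply lt_0_INR; lia).
  apply Rmult_le_reg_r with (INR N); auto.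
  replace (X / INR N * INR N) with X by (field; lra). lra.
Qed.

Record equilibrium_shape (c : R) (q : nat) (pos : nat -> R) (n : nat -> nat) : Prop := {
  shape_n_first : n 1%nat = 2%nat;
  shape_n_last : n q = 2%nat;
  shape_n_le_2 : forall k, (1 <= k <= q)%nat -> (n k <= 2)%nat;
  shape_pos_first : pos 1%nat = half_gap pos 1%nat + c / 2;
  shape_pos_last : 1 - pos q = half_gap pos 1%nat + c / 2;
  shape_gap_last : half_gap pos (q - 1) = half_gap pos 1%nat;
  shape_pair : forall k, (1 < k < q)%nat -> n k = 2%nat ->
    half_gap pos (k - 1) = half_gap pos 1%nat /\ half_gap pos k = half_gap pos 1%nat;
  shape_single : forall k, (1 < k < q)%nat -> n k = 1%nat ->
    forall u, (1 <= u < q)%nat -> half_gap pos u <= half_gap pos (k - 1) + half_gap pos k;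
  shape_gap_max : forall u, (1 <= u < q)%nat -> half_gap pos u <= half_gap pos 1%nat }.

Section Necessity.

Context {m : nat} (c : R) {x : nat -> R} {q : nat} {pos : nat -> R} {n : nat -> nat}.
Hypotheses (Hc : 0 <= c < 1) (Hx : is_profile m x) (Hdec : decomposition m x q pos n)
  (Hq : (2 <= q)%nat).
Hypothesis NE : forall i, (i < m)%nat -> forall t, 0 <= t <= 1 ->
  v m c (deviate x i t) i <= v m c x i.

Lemma NE_half_gap_le i k u : (i < m)%nat -> (1 <= k <= q)%nat -> x i = pos k ->
  (1 <= u < q)%nat -> u <> k \/ (2 <= n k)%nat -> S u <> k \/ (2 <= n k)%nat ->
  half_gap pos u <= v m c x i.
Proof.
  intros Hi Hk Ei Hu Hl Hr.
  rewrite <- (v_deviate_midpoint c Hx Hdec Hq Hi u Hu).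
  - apply NE; auto.
    pose proof (pos_bounds Hdec Hx u ltac:(lia)). pose proof (pos_bounds Hdec Hx (S u) ltac:(lia)).
    lra.
  - apply (rival_at Hdec i u k); auto; lia.
  - apply (rival_at Hdec i (S u) k); auto; lia.
Qed.

Lemma NE_left_limit i : (i < m)%nat -> 0 <= v m c x i ->
  (exists j, rival m i j /\ x j = pos 1) -> (exists j, rival m i j /\ x j = pos q) ->
  pos 1 - c * (1 - (pos 1 + pos q) / 2) <= v m c x i.
Proof.
  intros Hi HV H1 Hlast.
  pose proof (pos_bounds Hdec Hx 1 ltac:(lia)). pose proof (pos_bounds Hdec Hx q ltac:(lia)).
  pose proof (pos_lt Hdec 1 q ltac:(lia) ltac:(lia) ltac:(lia)).
  destruct (Req_dec (pos 1) 0) as [E0|Hp].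
  { assert (0 <= c * (1 - (pos 1 + pos q) / 2)) by (apply Rmult_le_pos; lra). lra. }
  apply (le_of_le_sub_small _ _ ((1 + c) / 2) (pos 1)); try lra.
  intros d Hd. eapply Rle_trans; [|apply (NE i Hi (pos 1 - d)); lra].
  rewrite (v_deviate_left_of_first c Hx Hdec Hq Hi H1 Hlast) by lra.
  lra.
Qed.

Lemma NE_right_limit i : (i < m)%nat -> 0 <= v m c x i ->
  (exists j, rival m i j /\ x j = pos 1) -> (exists j, rival m i j /\ x j = pos q) ->
  (1 - pos q) - c * ((pos 1 + pos q) / 2) <= v m c x i.
Proof.
  intros Hi HV H1 Hlast.
  pose proof (pos_bounds Hdec Hx 1 ltac:(lia)). pose proof (pos_bounds Hdec Hx q ltac:(lia)).
  pose proof (pos_lt Hdec 1 q ltac:(lia) ltac:(lia) ltac:(lia)).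
  destruct (Req_dec (pos q) 1) as [E1|Hp].
  { assert (0 <= c * ((pos 1 + pos q) / 2)) by (apply Rmult_le_pos; lra). lra. }
  apply (le_of_le_sub_small _ _ ((1 + c) / 2) (1 - pos q)); try lra.
  intros d Hd. eapply Rle_trans; [|apply (NE i Hi (pos q + d)); lra].
  rewrite (v_deviate_right_of_last c Hx Hdec Hq Hi H1 Hlast) by lra.
  lra.
Qed.

(* A lone leftmost candidate strictly gains by moving halfway towards her neighbour. *)
Lemma NE_n_first_ge2 : (2 <= n 1)%nat.
Proof.
  destruct (pos_occupied Hdec 1) as [i [Hi Ei]]; [lia|].
  destruct (Nat.le_gt_cases 2 (n 1)) as [|Hn]; auto. exfalso.
  assert (Hn1 : n 1 = 1%nat) by (pose proof (n_ge1 Hdec 1 ltac:(lia)); lia).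
  assert (Hright : forall j, rival m i j -> pos 2 <= x j).
  { intros j [Hj Hne]. destruct (occupied_pos Hdec j Hj) as [k [Hk E]]. rewrite E.
    destruct (Nat.eq_dec k 1) as [->|].
    - exfalso. apply Hne, (n_eq1_unique Hdec 1); auto; lia.
    - apply (pos_le Hdec); lia. }
  pose proof (pos_bounds Hdec Hx 1 ltac:(lia)). pose proof (pos_bounds Hdec Hx 2 ltac:(lia)).
  pose proof (pos_lt Hdec 1 2 ltac:(lia) ltac:(lia) ltac:(lia)).
  pose proof (pos_le Hdec 2 q ltac:(lia) ltac:(lia) ltac:(lia)).
  set (t := (pos 1 + pos 2) / 2).
  assert (Ht : 0 <= t <= 1) by (unfold t; lra).
  specialize (NE i Hi t Ht).
  rewrite (v_at_first c Hx Hdec Hq Hi Ei), Hn1, INR_1 in NE.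
  rewrite (v_deviate_leftmost m c x i t Hi Hx Ht (pos 2) (pos q)) in NE; try (unfold t; lra).
  - rewrite n_at_deviate_alone, INR_1 in NE; auto.
    + assert (0 <= c * (t - pos 1)) by (apply Rmult_le_pos; unfold t; lra). unfold t in *. lra.
    + intros j Hj E. specialize (Hright j Hj). unfold t in E. lra.
  - intros j Hj. specialize (Hright j Hj). unfold t; lra.
  - apply (rival_at Hdec i 2 1); auto; lia.
  - intros j Hj _. auto.
  - apply (rival_at Hdec i q 1); auto; lia.
  - intros j [Hj _]. apply (le_pos_last Hdec); auto; lia.
Qed.

Lemma NE_n_last_ge2 : (2 <= n q)%nat.
Proof.
  destruct (pos_occupied Hdec q) as [i [Hi Ei]]; [lia|].
  destruct (Nat.le_gt_cases 2 (n q)) as [|Hn]; auto. exfalso.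
  assert (Hnq : n q = 1%nat) by (pose proof (n_ge1 Hdec q ltac:(lia)); lia).
  assert (Hleft : forall j, rival m i j -> x j <= pos (q - 1)).
  { intros j [Hj Hne]. destruct (occupied_pos Hdec j Hj) as [k [Hk E]]. rewrite E.
    destruct (Nat.eq_dec k q) as [->|].
    - exfalso. apply Hne, (n_eq1_unique Hdec q); auto; lia.
    - apply (pos_le Hdec); lia. }
  pose proof (pos_bounds Hdec Hx q ltac:(lia)). pose proof (pos_bounds Hdec Hx (q - 1) ltac:(lia)).
  pose proof (pos_lt Hdec (q - 1) q ltac:(lia) ltac:(lia) ltac:(lia)).
  pose proof (pos_le Hdec 1 (q - 1) ltac:(lia) ltac:(lia) ltac:(lia)).
  set (t := (pos (q - 1) + pos q) / 2).
  assert (Ht : 0 <= t <= 1) by (unfold t; lra).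
  specialize (NE i Hi t Ht).
  rewrite (v_at_last c Hx Hdec Hq Hi Ei), Hnq, INR_1 in NE.
  rewrite (v_deviate_rightmost m c x i t Hi Hx Ht (pos (q - 1)) (pos 1)) in NE; try (unfold t; lra).
  - rewrite n_at_deviate_alone, INR_1 in NE; auto.
    + assert (0 <= c * (pos q - t)) by (apply Rmult_le_pos; unfold t; lra). unfold t in *. lra.
    + intros j Hj E. specialize (Hleft j Hj). unfold t in E. lra.
  - intros j Hj. specialize (Hleft j Hj). unfold t; lra.
  - apply (rival_at Hdec i (q - 1) q); auto; lia.
  - intros j Hj _. auto.
  - apply (rival_at Hdec i 1 q); auto; lia.
  - intros j [Hj _]. apply (pos_first_le Hdec); auto; lia.
Qed.

Lemma NE_first_bounds i : (i < m)%nat -> x i = pos 1 ->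
  half_gap pos 1 <= v m c x i /\ pos 1 - c * (1 - (pos 1 + pos q) / 2) <= v m c x i.
Proof.
  intros Hi Ei. pose proof NE_n_first_ge2.
  assert (Hgap : half_gap pos 1 <= v m c x i)
    by (apply (NE_half_gap_le i 1 1); auto; lia).
  split; auto. apply NE_left_limit; auto.
  - pose proof (half_gap_pos Hdec 1 ltac:(lia)). lra.
  - apply (rival_at Hdec i 1 1); auto; lia.
  - apply (rival_at Hdec i q 1); auto; lia.
Qed.

Lemma NE_last_bounds i : (i < m)%nat -> x i = pos q ->
  half_gap pos (q - 1) <= v m c x i /\ (1 - pos q) - c * ((pos 1 + pos q) / 2) <= v m c x i.
Proof.
  intros Hi Ei. pose proof NE_n_last_ge2.
  assert (Hgap : half_gap pos (q - 1) <= v m c x i)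
    by (apply (NE_half_gap_le i q (q - 1)); auto; lia).
  split; auto. apply NE_right_limit; auto.
  - pose proof (half_gap_pos Hdec (q - 1) ltac:(lia)). lra.
  - apply (rival_at Hdec i 1 q); auto; lia.
  - apply (rival_at Hdec i q q); auto; lia.
Qed.

Lemma NE_n_first : n 1 = 2%nat.
Proof.
  destruct (pos_occupied Hdec 1) as [i [Hi Ei]]; [lia|].
  destruct (NE_first_bounds i Hi Ei) as [Hgap Hlim].
  pose proof (half_gap_pos Hdec 1 ltac:(lia)). pose proof NE_n_first_ge2.
  enough ((n 1 <= 2)%nat) by lia.
  apply (n_le_2_of_share (v m c x i) ((pos 1 + pos 2) / 2 - c * (1 - (pos 1 + pos q) / 2)));
    [apply v_at_first; auto|unfold half_gap in *; lra|lra].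
Qed.

Lemma NE_n_last : n q = 2%nat.
Proof.
  destruct (pos_occupied Hdec q) as [i [Hi Ei]]; [lia|].
  destruct (NE_last_bounds i Hi Ei) as [Hgap Hlim].
  pose proof (half_gap_pos Hdec (q - 1) ltac:(lia)). pose proof NE_n_last_ge2.
  enough ((n q <= 2)%nat) by lia.
  apply (n_le_2_of_share (v m c x i) ((1 - (pos (q - 1) + pos q) / 2) - c * ((pos 1 + pos q) / 2)));
    [apply v_at_last; auto|unfold half_gap in *; replace (S (q - 1)) with q in * by lia; lra|lra].
Qed.

Lemma NE_n_interior_le_2 k : (1 < k < q)%nat -> (n k <= 2)%nat.
Proof.
  intros Hk. destruct (Nat.le_gt_cases (n k) 1) as [|Hn]; [lia|].
  destruct (pos_occupied Hdec k) as [i [Hi Ei]]; [lia|].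
  assert (Hl : half_gap pos (k - 1) <= v m c x i)
    by (apply (NE_half_gap_le i k (k - 1)); auto; lia).
  assert (Hr : half_gap pos k <= v m c x i)
    by (apply (NE_half_gap_le i k k); auto; lia).
  pose proof (half_gap_pos Hdec k ltac:(lia)).
  apply (n_le_2_of_share (v m c x i) (half_gap pos (k - 1) + half_gap pos k));
    [apply (v_at_interior c Hx Hdec Hq Hi k Hk Ei)|lra|lra].
Qed.

Lemma NE_n_le_2 k : (1 <= k <= q)%nat -> (n k <= 2)%nat.
Proof.
  intros Hk. destruct (Nat.eq_dec k 1) as [->|]; [rewrite NE_n_first; lia|].
  destruct (Nat.eq_dec k q) as [->|]; [rewrite NE_n_last; lia|].
  apply NE_n_interior_le_2. lia.
Qed.

Lemma NE_first_payoff i : (i < m)%nat -> x i = pos 1 ->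
  v m c x i = half_gap pos 1 /\ pos 1 - c * (1 - (pos 1 + pos q) / 2) = half_gap pos 1.
Proof.
  intros Hi Ei. destruct (NE_first_bounds i Hi Ei) as [Hgap Hlim].
  rewrite (v_at_first c Hx Hdec Hq Hi Ei), NE_n_first in *.
  replace (INR 2) with 2 in * by (simpl; lra).
  unfold half_gap in *. lra.
Qed.

Lemma NE_last_payoff i : (i < m)%nat -> x i = pos q ->
  v m c x i = half_gap pos (q - 1) /\
  (1 - pos q) - c * ((pos 1 + pos q) / 2) = half_gap pos (q - 1).
Proof.
  intros Hi Ei. destruct (NE_last_bounds i Hi Ei) as [Hgap Hlim].
  rewrite (v_at_last c Hx Hdec Hq Hi Ei), NE_n_last in *.
  replace (INR 2) with 2 in * by (simpl; lra).
  unfold half_gap in *. replace (S (q - 1)) with q in * by lia. lra.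
Qed.

Lemma NE_half_gap_le_first u : (1 <= u < q)%nat -> half_gap pos u <= half_gap pos 1.
Proof.
  intros Hu. destruct (pos_occupied Hdec 1) as [i [Hi Ei]]; [lia|].
  rewrite <- (proj1 (NE_first_payoff i Hi Ei)).
  pose proof NE_n_first. apply (NE_half_gap_le i 1 u); auto; lia.
Qed.

Lemma NE_half_gap_last : half_gap pos (q - 1) = half_gap pos 1.
Proof.
  apply Rle_antisym; [apply NE_half_gap_le_first; lia|].
  destruct (pos_occupied Hdec q) as [i [Hi Ei]]; [lia|].
  rewrite <- (proj1 (NE_last_payoff i Hi Ei)).
  pose proof NE_n_last. apply (NE_half_gap_le i q 1); auto; lia.
Qed.

(* The two extreme deviation bounds are tight, which forces a symmetric profile. *)
Lemma NE_pos_first_last : pos 1 = half_gap pos 1 + c / 2 /\ 1 - pos q = half_gap pos 1 + c / 2.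
Proof.
  destruct (pos_occupied Hdec 1) as [i1 [Hi1 E1]]; [lia|].
  destruct (pos_occupied Hdec q) as [iq [Hiq Eq]]; [lia|].
  destruct (NE_first_payoff i1 Hi1 E1) as [_ H1].
  destruct (NE_last_payoff iq Hiq Eq) as [_ Hq'].
  rewrite NE_half_gap_last in Hq'.
  assert (Hsym : (1 + c) * (pos 1 + pos q - 1) = 0) by lra.
  apply Rmult_integral in Hsym as [|Hsym]; [lra|].
  replace (pos q) with (1 - pos 1) in * by lra. lra.
Qed.

Lemma NE_pair k : (1 < k < q)%nat -> n k = 2%nat ->
  half_gap pos (k - 1) = half_gap pos 1 /\ half_gap pos k = half_gap pos 1.
Proof.
  intros Hk Hn. destruct (pos_occupied Hdec k) as [i [Hi Ei]]; [lia|].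
  assert (Hl : half_gap pos (k - 1) <= v m c x i)
    by (apply (NE_half_gap_le i k (k - 1)); auto; lia).
  assert (Hr : half_gap pos k <= v m c x i)
    by (apply (NE_half_gap_le i k k); auto; lia).
  assert (H1 : half_gap pos 1 <= v m c x i)
    by (apply (NE_half_gap_le i k 1); auto; lia).
  pose proof (NE_half_gap_le_first (k - 1) ltac:(lia)).
  pose proof (NE_half_gap_le_first k ltac:(lia)).
  rewrite (v_at_interior c Hx Hdec Hq Hi k Hk Ei), Hn in *.
  replace (INR 2) with 2 in * by (simpl; lra).
  lra.
Qed.

Lemma NE_single k : (1 < k < q)%nat -> n k = 1%nat ->
  forall u, (1 <= u < q)%nat -> half_gap pos u <= half_gap pos (k - 1) + half_gap pos k.
Proof.
  intros Hk Hn u Hu. destruct (pos_occupied Hdec k) as [i [Hi Ei]]; [lia|].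
  pose proof (half_gap_pos Hdec (k - 1) ltac:(lia)). pose proof (half_gap_pos Hdec k ltac:(lia)).
  destruct (Nat.eq_dec u (k - 1)) as [->|]; [lra|]. destruct (Nat.eq_dec u k) as [->|]; [lra|].
  replace (half_gap pos (k - 1) + half_gap pos k) with (v m c x i).
  - apply (NE_half_gap_le i k u); auto; lia.
  - rewrite (v_at_interior c Hx Hdec Hq Hi k Hk Ei), Hn, INR_1. field.
Qed.

Lemma NE_shape : equilibrium_shape c q pos n.
Proof.
  destruct NE_pos_first_last.
  split; auto using NE_n_first, NE_n_last, NE_n_le_2, NE_half_gap_last, NE_pair, NE_single,
    NE_half_gap_le_first.
Qed.

End Necessity.

Lemma max_index (P : nat -> Prop) (f : nat -> R) m : (exists j, (j < m)%nat /\ P j) ->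
  exists j0, (j0 < m)%nat /\ P j0 /\ forall j, (j < m)%nat -> P j -> f j <= f j0.
Proof.
  induction m as [|m IH]; intros [j [Hj Pj]]; [lia|].
  destruct (classic (exists j, (j < m)%nat /\ P j)) as [E|E].
  - destruct (IH E) as [j0 [H0 [P0 M0]]].
    destruct (classic (P m /\ f j0 < f m)) as [[Pm Hlt]|Hn].
    + exists m. repeat split; auto. intros k Hk Pk.
      destruct (Nat.eq_dec k m) as [->|]; [lra|]. specialize (M0 k ltac:(lia) Pk). lra.
    + exists j0. repeat split; auto. intros k Hk Pk.
      destruct (Nat.eq_dec k m) as [->|]; [|apply M0; auto; lia].
      apply Rnot_lt_le. intros Hlt. apply Hn. auto.
  - assert (j = m) as ->.
    { destruct (Nat.eq_dec j m); auto. exfalso. apply E. exists j. split; auto. lia. }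
    exists m. repeat split; auto. intros k Hk Pk.
    destruct (Nat.eq_dec k m) as [->|]; [lra|]. exfalso. apply E. exists k. split; auto. lia.
Qed.

Section NearestRival.

Variables (m : nat) (x : nat -> R) (i : nat) (t : R).

Lemma nearest_rival_below : (exists j, rival m i j /\ x j < t) ->
  exists l, (exists j, rival m i j /\ x j = l) /\ l < t /\
    forall j, rival m i j -> x j < t -> x j <= l.
Proof.
  intros [j [[Hj Hne] Hlt]].
  destruct (max_index (fun j => rival m i j /\ x j < t) x m) as [jl [_ [[Hr Hl] Hmax]]].
  { exists j. repeat split; auto. }
  exists (x jl). repeat split; eauto. intros k [Hk Hk'] Hkt. apply Hmax; repeat split; auto.
Qed.

Lemma nearest_rival_above : (exists j, rival m i j /\ t < x j) ->
  exists r, (exists j, rival m i j /\ x j = r) /\ t < r /\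
    forall j, rival m i j -> t < x j -> r <= x j.
Proof.
  intros [j [[Hj Hne] Hlt]].
  destruct (max_index (fun j => rival m i j /\ t < x j) (fun j => - x j) m)
    as [jr [_ [[Hr Hrt] Hmin]]].
  { exists j. repeat split; auto. }
  exists (x jr). repeat split; eauto. intros k [Hk Hk'] Hkt.
  assert (- x k <= - x jr) by (apply Hmin; repeat split; auto). lra.
Qed.

End NearestRival.

Section Sufficiency.

Context {m : nat} (c : R) {x : nat -> R} {q : nat} {pos : nat -> R} {n : nat -> nat}.
Hypotheses (Hc : 0 <= c < 1) (Hx : is_profile m x) (Hdec : decomposition m x q pos n)
  (Hq : (2 <= q)%nat).
Hypotheses (Hn1 : n 1 = 2%nat) (Hnq : n q = 2%nat)
  (Hnle : forall k, (1 <= k <= q)%nat -> (n k <= 2)%nat).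
Hypotheses (Hfirst : pos 1 = half_gap pos 1 + c / 2) (Hlast : 1 - pos q = half_gap pos 1 + c / 2)
  (Hgap_last : half_gap pos (q - 1) = half_gap pos 1).
Hypothesis Hpair : forall k, (1 < k < q)%nat -> n k = 2%nat ->
  half_gap pos (k - 1) = half_gap pos 1 /\ half_gap pos k = half_gap pos 1.
Hypothesis Hsingle : forall k, (1 < k < q)%nat -> n k = 1%nat ->
  forall u, (1 <= u < q)%nat -> half_gap pos u <= half_gap pos (k - 1) + half_gap pos k.
Hypothesis Hgap_max : forall u, (1 <= u < q)%nat -> half_gap pos u <= half_gap pos 1.

Lemma shape_payoff_ge i : (i < m)%nat -> half_gap pos 1 <= v m c x i.
Proof.
  intros Hi. destruct (occupied_pos Hdec i Hi) as [k [Hk Ei]].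
  destruct (Nat.eq_dec k 1) as [->|Hk1].
  { rewrite (v_at_first c Hx Hdec Hq Hi Ei), Hn1. replace (INR 2) with 2 by (simpl; lra).
    replace (pos q) with (1 - pos 1) by lra. unfold half_gap in *. lra. }
  destruct (Nat.eq_dec k q) as [->|Hkq].
  { rewrite (v_at_last c Hx Hdec Hq Hi Ei), Hnq. replace (INR 2) with 2 by (simpl; lra).
    replace (pos 1 + pos q) with 1 by lra.
    unfold half_gap in *. replace (S (q - 1)) with q in * by lia. lra. }
  rewrite (v_at_interior c Hx Hdec Hq Hi k ltac:(lia) Ei).
  pose proof (Hnle k Hk). pose proof (n_ge1 Hdec k Hk).
  destruct (Nat.eq_dec (n k) 1) as [E|E].
  - rewrite E, INR_1. specialize (Hsingle k ltac:(lia) E 1 ltac:(lia)). lra.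
  - assert (E2 : n k = 2%nat) by lia. rewrite E2. replace (INR 2) with 2 by (simpl; lra).
    destruct (Hpair k ltac:(lia) E2). lra.
Qed.

(* Either (l, r) is a single gap, or [i] sits alone strictly between l and r and
   (r - l) / 2 is exactly her payoff. *)
Lemma shape_rival_gap_le i l r : (i < m)%nat -> l < r ->
  (exists j, rival m i j /\ x j = l) -> (exists j, rival m i j /\ x j = r) ->
  (forall j, rival m i j -> x j <= l \/ r <= x j) -> (r - l) / 2 <= v m c x i.
Proof.
  intros Hi Hlr [jl [[Hjl _] <-]] [jr [[Hjr _] <-]] Hfree.
  destruct (occupied_pos Hdec jl Hjl) as [u [Hu Eu]].
  destruct (occupied_pos Hdec jr Hjr) as [w [Hw Ew]].
  rewrite Eu, Ew in *.
  assert (Huw : (u < w)%nat).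
  { destruct (Nat.lt_ge_cases u w) as [|Hwu]; auto.
    pose proof (pos_le Hdec w u ltac:(lia) Hwu ltac:(lia)). lra. }
  assert (Honly : forall k, (u < k < w)%nat -> x i = pos k).
  { intros k Hk. destruct (pos_occupied Hdec k ltac:(lia)) as [j [Hj Ej]].
    destruct (Nat.eq_dec j i) as [<-|Hne]; auto.
    pose proof (pos_lt Hdec u k ltac:(lia) ltac:(lia) ltac:(lia)).
    pose proof (pos_lt Hdec k w ltac:(lia) ltac:(lia) ltac:(lia)).
    destruct (Hfree j (conj Hj Hne)); lra. }
  destruct (Nat.eq_dec w (S u)) as [->|Hw2].
  { pose proof (Hgap_max u ltac:(lia)). pose proof (shape_payoff_ge i Hi).
    unfold half_gap in *. lra. }
  assert (w = S (S u)) as ->.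
  { destruct (Nat.eq_dec w (S (S u))); auto. exfalso.
    pose proof (Honly (S u) ltac:(lia)). pose proof (Honly (S (S u)) ltac:(lia)).
    pose proof (pos_lt Hdec (S u) (S (S u)) ltac:(lia) ltac:(lia) ltac:(lia)). lra. }
  assert (Ei : x i = pos (S u)) by (apply Honly; lia).
  pose proof (pos_lt Hdec u (S u) ltac:(lia) ltac:(lia) ltac:(lia)).
  pose proof (pos_lt Hdec (S u) (S (S u)) ltac:(lia) ltac:(lia) ltac:(lia)).
  assert (Hn : n (S u) = 1%nat).
  { pose proof (n_ge1 Hdec (S u) ltac:(lia)).
    destruct (Nat.le_gt_cases (n (S u)) 1); [lia|exfalso].
    destruct (rival_at_shared Hdec i (S u) ltac:(lia) ltac:(lia)) as [j [Hj Ej]].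
    destruct (Hfree j Hj); lra. }
  rewrite (v_at_interior c Hx Hdec Hq Hi (S u) ltac:(lia) Ei), Hn, INR_1.
  unfold half_gap. replace (S u - 1)%nat with u by lia. lra.
Qed.

Lemma shape_symmetric : pos q = 1 - pos 1.
Proof. lra. Qed.

Lemma shape_rival_first i : exists j, rival m i j /\ x j = pos 1.
Proof. apply (rival_at_shared Hdec); [lia|rewrite Hn1; lia]. Qed.

Lemma shape_rival_last i : exists j, rival m i j /\ x j = pos q.
Proof. apply (rival_at_shared Hdec); [lia|rewrite Hnq; lia]. Qed.

Lemma shape_deviate_outside i t : (i < m)%nat -> 0 <= t <= 1 -> t < pos 1 \/ pos q < t ->
  v m c (deviate x i t) i <= v m c x i.
Proof.
  intros Hi Ht Hout. eapply Rle_trans; [|apply (shape_payoff_ge i Hi)].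
  pose proof shape_symmetric.
  destruct Hout as [Hlt|Hgt].
  - rewrite (v_deviate_left_of_first c Hx Hdec Hq Hi (shape_rival_first i) (shape_rival_last i))
      by lra.
    assert (0 <= c * (pos 1 - t)) by (apply Rmult_le_pos; lra).
    replace (c * (1 - (t + pos q) / 2)) with (c / 2 + c * (pos 1 - t) / 2)
      by (rewrite shape_symmetric; field).
    lra.
  - rewrite (v_deviate_right_of_last c Hx Hdec Hq Hi (shape_rival_first i) (shape_rival_last i))
      by lra.
    assert (0 <= c * (t - pos q)) by (apply Rmult_le_pos; lra).
    replace (c * ((pos 1 + t) / 2)) with (c / 2 + c * (t - pos q) / 2)
      by (rewrite shape_symmetric; field).
    lra.
Qed.

Lemma shape_deviate_first i : (i < m)%nat -> x i <> pos 1 ->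
  v m c (deviate x i (pos 1)) i <= v m c x i.
Proof.
  intros Hi Hne.
  pose proof (pos_bounds Hdec Hx 1 ltac:(lia)). pose proof (pos_bounds Hdec Hx q ltac:(lia)).
  pose proof (pos_lt Hdec 1 q ltac:(lia) ltac:(lia) ltac:(lia)).
  assert (Hfirst_le : forall j, rival m i j -> pos 1 <= x j)
    by (intros j [Hj _]; apply (pos_first_le Hdec); auto; lia).
  destruct (nearest_rival_above m x i (pos 1)) as [r [Hr [Hr1 Hrmin]]].
  { destruct (shape_rival_last i) as [j [Hj Ej]]. exists j. split; auto. lra. }
  assert (Hgap : (r - pos 1) / 2 <= v m c x i).
  { apply shape_rival_gap_le; auto using shape_rival_first.
    intros j Hj. destruct (Rle_dec (x j) (pos 1)); [left; auto|right; apply Hrmin; auto; lra]. }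
  pose proof (shape_payoff_ge i Hi). pose proof (half_gap_pos Hdec 1 ltac:(lia)).
  rewrite (v_deviate_leftmost m c x i (pos 1) Hi Hx ltac:(lra) r (pos q));
    auto using shape_rival_last.
  - rewrite n_at_deviate_new, <- (n_eq_n_at Hdec 1), Hn1 by (auto; lia).
    apply share_le; [lia|]. replace (INR 3) with 3 by (simpl; lra).
    replace (pos 1 + pos q) with 1 by lra. lra.
  - intros j [Hj _]. apply (le_pos_last Hdec); auto; lia.
Qed.

Lemma shape_deviate_last i : (i < m)%nat -> x i <> pos q ->
  v m c (deviate x i (pos q)) i <= v m c x i.
Proof.
  intros Hi Hne.
  pose proof (pos_bounds Hdec Hx 1 ltac:(lia)). pose proof (pos_bounds Hdec Hx q ltac:(lia)).
  pose proof (pos_lt Hdec 1 q ltac:(lia) ltac:(lia) ltac:(lia)).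
  assert (Hle_last : forall j, rival m i j -> x j <= pos q)
    by (intros j [Hj _]; apply (le_pos_last Hdec); auto; lia).
  destruct (nearest_rival_below m x i (pos q)) as [l [Hl [Hlq Hlmax]]].
  { destruct (shape_rival_first i) as [j [Hj Ej]]. exists j. split; auto. lra. }
  assert (Hgap : (pos q - l) / 2 <= v m c x i).
  { apply shape_rival_gap_le; auto using shape_rival_last.
    intros j Hj. destruct (Rle_dec (pos q) (x j)); [right; auto|left; apply Hlmax; auto; lra]. }
  pose proof (shape_payoff_ge i Hi). pose proof (half_gap_pos Hdec 1 ltac:(lia)).
  rewrite (v_deviate_rightmost m c x i (pos q) Hi Hx ltac:(lra) l (pos 1));
    auto using shape_rival_first.
  - rewrite n_at_deviate_new, <- (n_eq_n_at Hdec q), Hnq by (auto; lia).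
    apply share_le; [lia|]. replace (INR 3) with 3 by (simpl; lra).
    replace (pos 1 + pos q) with 1 by lra. lra.
  - intros j [Hj _]. apply (pos_first_le Hdec); auto; lia.
Qed.

Lemma shape_deviate_interior i t : (i < m)%nat -> pos 1 < t < pos q ->
  v m c (deviate x i t) i <= v m c x i.
Proof.
  intros Hi Ht.
  pose proof (pos_bounds Hdec Hx 1 ltac:(lia)). pose proof (pos_bounds Hdec Hx q ltac:(lia)).
  destruct (nearest_rival_below m x i t) as [l [Hl [Hlt Hlmax]]].
  { destruct (shape_rival_first i) as [j [Hj Ej]]. exists j. split; auto. lra. }
  destruct (nearest_rival_above m x i t) as [r [Hr [Hrt Hrmin]]].
  { destruct (shape_rival_last i) as [j [Hj Ej]]. exists j. split; auto. lra. }
  pose proof (shape_payoff_ge i Hi). pose proof (half_gap_pos Hdec 1 ltac:(lia)).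
  rewrite (v_deviate_between m c x i t Hi Hx ltac:(lra) l r); auto.
  destruct (classic (exists j, rival m i j /\ x j = t)) as [[j [Hj Ej]]|Hnone].
  - pose proof (n_at_deviate_joined m x i t Hi j Hj Ej) as HN.
    assert (Hleft : (t - l) / 2 <= v m c x i).
    { apply shape_rival_gap_le; eauto. intros k Hk.
      destruct (Rlt_dec (x k) t); [left; apply Hlmax|right]; auto; lra. }
    assert (Hright : (r - t) / 2 <= v m c x i).
    { apply shape_rival_gap_le; eauto. intros k Hk.
      destruct (Rlt_dec t (x k)); [right; apply Hrmin|left]; auto; lra. }
    apply share_le; [lia|]. apply le_INR in HN. replace (INR 2) with 2 in HN by (simpl; lra).
    assert (2 * v m c x i <= INR (n_at m (deviate x i t) t) * v m c x i)
      by (apply Rmult_le_compat_r; lra).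
    lra.
  - rewrite n_at_deviate_alone by (auto; intros j Hj Ej; apply Hnone; eauto).
    apply share_le; [lia|]. rewrite INR_1, Rmult_1_l.
    apply shape_rival_gap_le; auto; [lra|]. intros k Hk.
    destruct (Rlt_dec (x k) t); [left; apply Hlmax; auto|right; apply Hrmin; auto].
    destruct (Req_dec (x k) t); [exfalso; apply Hnone; eauto|lra].
Qed.

Lemma shape_is_NE : is_NE m c x.
Proof.
  split; auto. intros i Hi t Ht. apply Rle_ge.
  destruct (Req_dec t (x i)) as [->|Hti]; [rewrite deviate_id; lra|].
  destruct (Rtotal_order t (pos 1)) as [Hlt1|[->|Hgt1]].
  - apply shape_deviate_outside; auto.
  - apply shape_deviate_first; auto.
  - destruct (Rtotal_order t (pos q)) as [Hltq|[->|Hgtq]].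
    + apply shape_deviate_interior; auto.
    + apply shape_deviate_last; auto.
    + apply shape_deviate_outside; auto.
Qed.

End Sufficiency.

Lemma is_NE_iff_equilibrium_shape {m : nat} {c : R} {x : nat -> R} {q : nat} {pos : nat -> R}
  {n : nat -> nat} : 0 <= c < 1 -> is_profile m x ->
  decomposition m x q pos n -> (2 <= q)%nat -> is_NE m c x <-> equilibrium_shape c q pos n.
Proof.
  intros Hc Hx Hdec Hq. split.
  - intros [_ HNE]. apply (NE_shape c Hc Hx Hdec Hq).
    intros i Hi t Ht. apply Rge_le, HNE; auto.
  - intros []. eapply shape_is_NE; eauto.
Qed.

Lemma is_NCNE_iff_is_NE {m : nat} (c : R) {x : nat -> R} {q : nat} {pos : nat -> R}
  {n : nat -> nat} : decomposition m x q pos n -> (2 <= q)%nat ->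
  is_NCNE m c x <-> is_NE m c x.
Proof.
  intros Hdec Hq. split; [intros [HNE _]; auto|intros HNE; split; auto].
  destruct (pos_occupied Hdec 1) as [i1 [Hi1 E1]]; [lia|].
  destruct (pos_occupied Hdec q) as [iq [Hiq Eq]]; [lia|].
  exists i1, iq. repeat split; auto. rewrite E1, Eq.
  pose proof (pos_lt Hdec 1 q ltac:(lia) ltac:(lia) ltac:(lia)). lra.
Qed.

Lemma lenL_first q pos : lenL q pos 1 = pos 1%nat.
Proof. unfold lenL. simpl. ring. Qed.

Lemma lenR_last q pos : lenR q pos q = 1 - pos q.
Proof. unfold lenR. rewrite Nat.eqb_refl. reflexivity. Qed.

Lemma lenL_half_gap q pos k : (1 < k)%nat -> lenL q pos k = half_gap pos (k - 1).
Proof.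
  intros Hk. unfold lenL, half_gap. replace (S (k - 1)) with k by lia.
  destruct (Nat.eqb_spec k 1); [lia|reflexivity].
Qed.

Lemma lenR_half_gap q pos k : k <> q -> lenR q pos k = half_gap pos k.
Proof. intros Hk. unfold lenR. apply Nat.eqb_neq in Hk. rewrite Hk. reflexivity. Qed.

Lemma lenI_half_gaps q pos k : (1 < k < q)%nat ->
  lenI q pos k = half_gap pos (k - 1) + half_gap pos k.
Proof. intros Hk. unfold lenI. rewrite lenL_half_gap, lenR_half_gap by lia. reflexivity. Qed.

Lemma half_electorates_of_half_gaps (P : R -> Prop) q pos :
  (forall u, (1 <= u < q)%nat -> P (half_gap pos u)) ->
  (forall k, (1 <= k <= q)%nat -> k <> 1%nat -> P (lenL q pos k)) /\
  (forall k, (1 <= k <= q)%nat -> k <> q -> P (lenR q pos k)).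
Proof.
  intros H. split; intros k Hk Hne.
  - rewrite lenL_half_gap by lia. apply H. lia.
  - rewrite lenR_half_gap by lia. apply H. lia.
Qed.

Theorem theorem1 (m : nat) (c : R) (x : nat -> R) (q : nat) (pos : nat -> R) (n : nat -> nat)
  (Hm : (2 <= m)%nat) (Hc : 0 <= c < 1)
  (Hx : is_profile m x) (Hdec : decomposition m x q pos n) (Hq : (2 <= q)%nat) :
  is_NCNE m c x <->
  let Ip := lenR q pos 1 in
  ((forall k, (1 <= k <= q)%nat -> (n k <= 2)%nat) /\ n 1%nat = 2%nat /\ n q = 2%nat) /\
  (lenL q pos q = Ip /\
   forall k, (1 < k)%nat -> (k < q)%nat -> n k = 2%nat ->
     lenL q pos k = Ip /\ lenR q pos k = Ip) /\
  (lenL q pos 1 = Ip + c / 2 /\ lenR q pos q = Ip + c / 2) /\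
  (forall i, (1 <= i <= q)%nat -> n i = 1%nat ->
     (forall k, (1 <= k <= q)%nat -> k <> 1%nat -> lenI q pos i >= lenL q pos k) /\
     (forall k, (1 <= k <= q)%nat -> k <> q -> lenI q pos i >= lenR q pos k)) /\
  ((forall k, (1 <= k <= q)%nat -> k <> 1%nat -> Ip >= lenL q pos k) /\
   (forall k, (1 <= k <= q)%nat -> k <> q -> Ip >= lenR q pos k)).
Proof.
  cbv zeta.
  rewrite (is_NCNE_iff_is_NE c Hdec Hq), (is_NE_iff_equilibrium_shape Hc Hx Hdec Hq).
  rewrite lenL_first, lenR_last, (lenL_half_gap q pos q), (lenR_half_gap q pos 1) by lia.
  split.
  - intros [Hn1 Hnq Hnle Hfirst Hlast Hgap_last Hpair Hsingle Hgap_max].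
    split; [auto|]. split; [split; auto|].
    { intros k Hk1 Hkq Hnk. rewrite lenL_half_gap, lenR_half_gap by lia. apply Hpair; lia. }
    split; [split; lra|]. split.
    + intros i Hi Hni.
      assert (Hint : (1 < i < q)%nat)
        by (destruct (Nat.eq_dec i 1), (Nat.eq_dec i q); subst; try congruence; lia).
      rewrite lenI_half_gaps by auto.
      apply half_electorates_of_half_gaps. intros u Hu. apply Rle_ge, Hsingle; auto.
    + apply half_electorates_of_half_gaps. intros u Hu. apply Rle_ge, Hgap_max; auto.
  - intros [[Hnle [Hn1 Hnq]] [[Hgap_last Hpair] [[Hfirst Hlast] [Hsingle [_ Hgap_max]]]]].
    split; auto.
    + intros k Hk Hnk. destruct (Hpair k) as [HL HR]; try lia.
      rewrite lenL_half_gap in HL by lia. rewrite lenR_half_gap in HR by lia. auto.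
    + intros k Hk Hnk u Hu. destruct (Hsingle k ltac:(lia) Hnk) as [_ Hle].
      specialize (Hle u ltac:(lia) ltac:(lia)).
      rewrite lenI_half_gaps, lenR_half_gap in Hle by lia. lra.
    + intros u Hu. specialize (Hgap_max u ltac:(lia) ltac:(lia)).
      rewrite lenR_half_gap in Hgap_max by lia. lra.
Qed.
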